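(* Let $G\subset GL_d(\mathbb R)$ act on $\mathfrak g_{\le n}(\mathbb R^d)$, let $U\subset\mathfrak g_{\le n}(\mathbb R^d)$ be a non-empty, $G$-invariant, semialgebraic subset, and let $\varrho:U\to G$ be an almost-polynomial moving frame for the action of $G$ on $U$, with associated maps $\lambda,\kappa$. Then the non-zero components of $\mathbf c\mapsto\lambda(\mathbf c)\varrho(\mathbf c)\cdot\mathbf c$ form a fundamental set of invariants consisting only of polynomial invariants.
   Context: $\mathfrak g_{\le n}(\mathbb R^d)$ is the free step-$n$ nilpotent Lie algebra realized inside the truncated tensor algebra $T_{\le n}(\mathbb R^d)$ (spanned by words over $\{1,\dots,d\}$ of length $\le n$, concatenation product), $\mathfrak g_{\le n}=\bigoplus_{k=1}^nW_k$, $W_1=\mathrm{span}\{1,\dots,d\}$, $W_{k+1}=[W_1,W_k]$; $B=(b_{ij})\in GL_d(\mathbb R)$ acts by the algebra automorphism sending letter $i\mapsto\sum_jb_{ji}j$ (i.e. $B^{\otimes k}$ on level $k$), which preserves $\mathfrak g_{\le n}$; $\mathbb R[\mathfrak g_{\le n}(\mathbb R^d)]$ denotes polynomial functions in its coordinates. A moving frame is a smooth map $\varrho:U\to G$ with $\varrho(g\cdot\mathbf c)=\varrho(\mathbf c)g^{-1}$. It is almost-polynomial if there are maps $\lambda:U\to GL_d(\mathbb R)$ and $\kappa:\mathfrak g_{\le n}(\mathbb R^d)\to GL_d(\mathbb R)$ such that $\lambda$ is $G$-invariant, $\lambda(\mathbf c)$ is diagonal for all $\mathbf c\in U$, $\lambda_{ii}\varrho_{ij}\in\mathbb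 R[\mathfrak g_{\le n}(\mathbb R^d)]$ for all $i,j$, and $\lambda(\mathbf c)=\kappa\big(\lambda(\mathbf c)\varrho(\mathbf c)\cdot\mathbf c\big)$ for all $\mathbf c\in U$. A set of invariants $\{J_1,\dots,J_m\}$ on $U$ is fundamental if every $G$-invariant function $I$ on $U$ can be written $I(p)=I'(J_1(p),\dots,J_m(p))$ for some function $I'$. *)

From HB Require Import structures.
From mathcomp Require Import all_boot all_order all_algebra.
From mathcomp Require Import all_classical all_reals all_analysis.
Set Implicit Arguments. Unset Strict Implicit. Unset Printing Implicit Defensive.
Import Order.TTheory GRing.Theory Num.Theory.
Import numFieldNormedType.Exports.
Local Open Scope classical_set_scope.
Local Open Scope ring_scope.

Definition Word (n d : nat) := {k : 'I_n.+1 & (nat_of_ord k).-tuple 'I_d}.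
Definition wseq n d (w : Word n d) : seq 'I_d := tval (tagged w).

Section Tensors.
Variables (R : realType) (n d : nat).

(** The truncated tensor algebra T_{<=n}(R^d), as coordinate vectors indexed
    by the words of length <= n (coordinate of word w = [coef x w]). *)
Definition tens := 'rV[R]_#|{: Word n d}|.
Definition coef (x : tens) (w : Word n d) : R := x ord0 (enum_rank w).
Definition mktens (f : Word n d -> R) : tens := \row_i f (enum_val i).

(** coefficient of an arbitrary sequence of letters (0 if longer than n) *)
Definition cseq (x : tens) (s : seq 'I_d) : R :=
  \sum_(w : Word n d) if wseq w == s then coef x w else 0.

(** concatenation product, truncated at level n *)
Definition tmul (x y : tens) : tens :=
  mktens (fun w => \sum_(m < (size (wseq w)).+1)
                     cseq x (take m (wseq w)) * cseq y (drop m (wseq w))).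
Definition tbracket (x y : tens) : tens := tmul x y - tmul y x.

(** W_1 = span of the letters *)
Definition W1 (x : tens) : Prop :=
  forall w : Word n d, size (wseq w) != 1%N -> coef x w = 0.

(** W_k; W_{k+1} = [W_1, W_k] (the span of brackets = finite sums of brackets) *)
Fixpoint Wlev (k : nat) : tens -> Prop :=
  match k with
  | 0 => fun x => x = 0
  | k'.+1 =>
    match k' with
    | 0 => W1
    | _ => fun x => exists s : seq (tens * tens),
              (forall p, p \in s -> W1 p.1 /\ Wlev k' p.2) /\
              x = \sum_(p <- s) tbracket p.1 p.2
    end
  end.

(** g_{<=n}(R^d) = W_1 + ... + W_n *)
Definition lie (x : tens) : Prop :=
  exists xs : 'I_n -> tens, (forall k : 'I_n, Wlev k.+1 (xs k)) /\
                          x = \sum_(k < n) xs k.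

(** action of B in GL_d: letter i |-> sum_j b_ji j, i.e. B^{(x)k} on level k *)
Definition act (B : 'M[R]_d) (x : tens) : tens :=
  mktens (fun w => \sum_(v : Word n d | size (wseq v) == size (wseq w))
                     coef x v * \prod_(p <- zip (wseq w) (wseq v)) B p.1 p.2).

Inductive polyfun : (tens -> R) -> Prop :=
| pf_const (a : R) : polyfun (fun _ => a)
| pf_coord (i : 'I_#|{: Word n d}|) : polyfun (fun x => x ord0 i)
| pf_add f g : polyfun f -> polyfun g -> polyfun (fun x => f x + g x)
| pf_mul f g : polyfun f -> polyfun g -> polyfun (fun x => f x * g x).

Definition poly_on (U : set tens) (f : tens -> R) : Prop :=
  exists p, polyfun p /\ forall c, U c -> f c = p c.

(** semialgebraic sets: finite unions of sets
    { p_1 = 0 /\ .. /\ q_1 > 0 /\ .. } with polynomial p_i, q_j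
    (atom (p, true) means p = 0, atom (p, false) means p > 0) *)
Definition semialgebraic (S : set tens) : Prop :=
  exists L : seq (seq ((tens -> R) * bool)),
    (forall cl, cl \in L -> forall a, a \in cl -> polyfun a.1) /\
    forall c, S c <-> exists2 cl, cl \in L &
       forall a, a \in cl -> if a.2 then a.1 c = 0 else 0 < a.1 c.

(** C^k functions on an open set (all iterated directional derivatives
    exist and are continuous) *)
Fixpoint Ck (k : nat) (O : set tens) (f : tens -> R) : Prop :=
  match k with
  | 0 => forall x, O x -> {for x, continuous f}
  | k'.+1 => (forall x v, O x -> derivable f x v) /\
             forall v, Ck k' O (fun x => derive f x v)
  end.

(** smooth map on an arbitrary subset U: locally the restriction of a
    smooth map defined on an open set *)
Definition smooth_on (U : set tens) (f : tens -> 'M[R]_d) : Prop :=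
  forall c, U c -> exists O : set tens, exists F : tens -> 'M[R]_d,
    [/\ open O, O c, (forall i j k, Ck k O (fun x => F x i j)) &
      forall x, U x -> O x -> F x = f x].

Definition is_subgroup (G : set 'M[R]_d) : Prop :=
  [/\ G 1%:M, (forall A, G A -> A \in unitmx),
      (forall A B, G A -> G B -> G (A *m B)) & (forall A, G A -> G (invmx A))].

Definition moving_frame (G : set 'M[R]_d) (U : set tens) (rho : tens -> 'M[R]_d) :=
  [/\ smooth_on U rho, (forall c, U c -> G (rho c)) &
      forall g c, G g -> U c -> rho (act g c) = rho c *m invmx g].

Definition almost_polynomial (G : set 'M[R]_d) (U : set tens)
    (rho lam kappa : tens -> 'M[R]_d) : Prop :=
  [/\ (forall c, U c -> lam c \in unitmx /\ is_diag_mx (lam c)),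
      (forall g c, G g -> U c -> lam (act g c) = lam c),
      (forall i j, poly_on U (fun c => lam c i i * rho c i j)),
      (forall x, lie x -> kappa x \in unitmx) &
      (forall c, U c -> lam c = kappa (act (lam c *m rho c) c))].

Definition invariant_on (G : set 'M[R]_d) (U : set tens) (f : tens -> R) :=
  forall g c, G g -> U c -> f (act g c) = f c.

End Tensors.

(** The tensor action is a monoid action of the matrices, so [F c := (lam c rho c) . c]
    is constant on [G]-orbits; its coordinates are polynomial because [lam] is
    diagonal and the products [lam_ii rho_ij] are polynomial.  Conversely,
    [F c] determines [lam c = kappa (F c)], hence [rho c . c], hence the orbit of
    [c]; so every invariant factors through [F], and the coordinates of [F] that
    vanish identically on [U] can be dropped. *)

From HB Require Import structures.
From mathcomp Require Import all_boot all_order all_algebra.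
From mathcomp Require Import all_classical all_reals all_analysis.
Set Implicit Arguments. Unset Strict Implicit. Unset Printing Implicit Defensive.
Import Order.TTheory GRing.Theory Num.Theory.
Local Open Scope classical_set_scope.
Local Open Scope ring_scope.

Section TensorAction.
Variables (R : realType) (n d : nat).
Local Notation tens := (tens R n d).
Local Notation Word := (Word n d).

Lemma coef_mktens (f : Word -> R) : coef (mktens f) =1 f.
Proof. by move=> w; rewrite /coef /mktens mxE enum_rankK. Qed.

Lemma coef_inj (x y : tens) : coef x =1 coef y -> x = y.
Proof.
move=> exy; apply/rowP => i; have := exy (enum_val i).
by rewrite /coef enum_valK (ord1 ord0).
Qed.

Lemma wseq_inj : injective (@wseq n d).
Proof.
case=> [k t] [k' t'] /= ett'.
have ekk' : k = k'.
  by apply: val_inj; have := congr1 size ett'; rewrite /wseq /= !size_tuple.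
by subst k'; congr existT; apply: val_inj.
Qed.

Lemma size_wseq_ltn (w : Word) : (size (wseq w) < n.+1)%N.
Proof. by rewrite /wseq size_tuple. Qed.

Lemma eq_tens_on_support (T : Type) (S : set T) (F : T -> tens) (c c' : T) :
  S c -> S c' ->
  (forall w, (exists c0, S c0 /\ coef (F c0) w <> 0) ->
     coef (F c) w = coef (F c') w) ->
  F c = F c'.
Proof.
move=> Sc Sc' eF; apply: coef_inj => w.
have [supp_w|off_w] := pselect (exists c0, S c0 /\ coef (F c0) w <> 0).
  exact: eF.
have coef0 c0 : S c0 -> coef (F c0) w = 0.
  by move=> Sc0; apply: contra_notP off_w => nz; exists c0.
by rewrite !coef0.
Qed.

(** [tensor_entry B s t] is the [(s, t)] entry of the tensor power of [B] when
    [size s = size t]. *)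
Definition tensor_entry (B : 'M[R]_d) (s t : seq 'I_d) : R :=
  \prod_(p <- zip s t) B p.1 p.2.

Lemma tensor_entryE (x0 : 'I_d) (B : 'M[R]_d) (s t : seq 'I_d) :
  size s = size t ->
  tensor_entry B s t = \prod_(i < size s) B (nth x0 s i) (nth x0 t i).
Proof.
rewrite /tensor_entry; elim: s t => [|a s IHs] [|b t] //=.
  by rewrite big_nil big_ord0.
by move=> [est]; rewrite big_cons big_ord_recl /= IHs.
Qed.

Lemma tensor_entry1 (s t : seq 'I_d) :
  size s = size t -> tensor_entry 1%:M s t = (s == t)%:R.
Proof.
rewrite /tensor_entry; elim: s t => [|a s IHs] [|b t] //=.
  by rewrite big_nil.
move=> [est]; rewrite big_cons IHs // mxE /= eqseq_cons.
by case: (a == b); case: (s == t); rewrite ?mulr1 ?mulr0 ?mul0r.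
Qed.

Lemma size_codom_ord k (f : {ffun 'I_k -> 'I_d}) : size (codom f) == k.
Proof. by rewrite size_codom card_ord. Qed.

Lemma nth_codom_ord (x0 : 'I_d) k (f : {ffun 'I_k -> 'I_d}) (i : 'I_k) :
  nth x0 (codom f) i = f i.
Proof.
by rewrite codomE (nth_map i) ?size_enum_ord // nth_ord_enum.
Qed.

Definition word_of_ffun k (hk : (k < n.+1)%N) (f : {ffun 'I_k -> 'I_d}) : Word :=
  existT (fun k0 : 'I_n.+1 => k0.-tuple 'I_d) (Ordinal hk)
    (Tuple (size_codom_ord f)).

Lemma big_words_of_size k (hk : (k < n.+1)%N) (x0 : 'I_d) (F : seq 'I_d -> R) :
  \sum_(u : Word | size (wseq u) == k) F (wseq u) =
  \sum_(f : {ffun 'I_k -> 'I_d}) F (codom f).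
Proof.
pose ffun_of_word (u : Word) := [ffun i : 'I_k => nth x0 (wseq u) i].
rewrite (reindex_onto (word_of_ffun hk) ffun_of_word) => [|u /eqP size_u].
  apply: eq_big => // f; rewrite size_codom_ord /=; apply/eqP/ffunP => i.
  by rewrite ffunE nth_codom_ord.
apply: wseq_inj; rewrite /wseq /= codomE.
under eq_map => i do rewrite ffunE.
rewrite (map_comp (nth x0 (wseq u)) val) val_enum_ord -size_u.
exact: (mkseq_nth x0 (wseq u)).
Qed.

Lemma tensor_entryM (x0 : 'I_d) (A B : 'M[R]_d) (s v : seq 'I_d) :
  size s = size v ->
  \sum_(f : {ffun 'I_(size s) -> 'I_d})
     tensor_entry A s (codom f) * tensor_entry B (codom f) v =
  tensor_entry (A *m B) s v.
Proof.
move=> esv; rewrite (tensor_entryE x0) //.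
have size_f (f : {ffun 'I_(size s) -> 'I_d}) : size (codom f) = size s.
  exact/eqP/size_codom_ord.
under eq_bigr => f _.
  rewrite (tensor_entryE x0 _ (esym (size_f f))).
  rewrite (tensor_entryE x0 _ (etrans (size_f f) esv)) size_f -big_split /=.
  under eq_bigr => i _ do rewrite nth_codom_ord.
over.
pose AB (i : 'I_(size s)) j := A (nth x0 s i) j * B j (nth x0 v i).
rewrite -(bigA_distr_bigA AB) /=.
by apply: eq_bigr => i _; rewrite mxE.
Qed.

Definition act_kernel (B : 'M[R]_d) (w v : Word) : R :=
  if size (wseq v) == size (wseq w) then tensor_entry B (wseq w) (wseq v) else 0.

Lemma coef_act (B : 'M[R]_d) (x : tens) (w : Word) :
  coef (act B x) w = \sum_v coef x v * act_kernel B w v.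
Proof.
rewrite /act coef_mktens big_mkcond /=; apply: eq_bigr => v _.
by rewrite /act_kernel; case: ifP; rewrite ?mulr0.
Qed.

Lemma act_kernelM (A B : 'M[R]_d) (w v : Word) :
  \sum_u act_kernel A w u * act_kernel B u v = act_kernel (A *m B) w v.
Proof.
rewrite (bigID (fun u => size (wseq u) == size (wseq w))) /=.
rewrite [X in _ + X]big1 ?addr0 => [|u /negbTE size_u]; last first.
  by rewrite /act_kernel size_u mul0r.
rewrite [in RHS]/act_kernel; case: ifP => [/eqP size_v|size_v]; last first.
  by apply: big1 => u /eqP size_u; rewrite /act_kernel size_u size_v mulr0.
under eq_bigr => u /eqP size_u do rewrite /act_kernel size_u size_v eqxx.
(* A default letter [x0] is available unless [w] is empty ([d] may be 0). *)
case ew: (wseq w) => [|x0 s].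
  rewrite (big_pred1 w) => [|u] /=; last first.
    by apply/eqP/eqP => [/size0nil eu|->]; [apply: wseq_inj; rewrite eu ew|rewrite ew].
  rewrite ew /tensor_entry /= big_nil mul1r.
  by case: (wseq v) => [|? ?]; rewrite !big_nil.
rewrite -ew (big_words_of_size (size_wseq_ltn w) x0
  (fun t => tensor_entry A (wseq w) t * tensor_entry B t (wseq v))).
exact: tensor_entryM.
Qed.

Lemma act1 (x : tens) : act 1%:M x = x.
Proof.
apply: coef_inj => w; rewrite coef_act (bigD1 w) //= big1 ?addr0 => [|v v_neq_w].
  by rewrite /act_kernel eqxx tensor_entry1 // eqxx mulr1.
rewrite /act_kernel; case: eqP => [size_v|]; last by rewrite mulr0.
rewrite tensor_entry1 // (_ : (wseq w == wseq v) = false) ?mulr0 //.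
by apply: contraNF v_neq_w => /eqP/wseq_inj ->.
Qed.

Lemma actM (A B : 'M[R]_d) (x : tens) : act A (act B x) = act (A *m B) x.
Proof.
apply: coef_inj => w; rewrite !coef_act.
under eq_bigr => u _ do rewrite coef_act mulr_suml.
rewrite exchange_big /=; apply: eq_bigr => v _.
rewrite -act_kernelM mulr_sumr; apply: eq_bigr => u _.
by rewrite -mulrA (mulrC (act_kernel B u v)).
Qed.

Lemma act_invmxK (A : 'M[R]_d) (x : tens) :
  A \in unitmx -> act (invmx A) (act A x) = x.
Proof. by move=> A_unit; rewrite actM mulVmx // act1. Qed.

End TensorAction.

Section PolyOn.
Variables (R : realType) (n d : nat) (U : set (tens R n d)).

Lemma poly_on_eq (f g : tens R n d -> R) :
  poly_on U g -> (forall c, U c -> f c = g c) -> poly_on U f.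
Proof. by move=> [p [pp gp]] efg; exists p; split => // c Uc; rewrite efg ?gp. Qed.

Lemma poly_on_cst (a : R) : poly_on U (fun _ => a).
Proof. by exists (fun _ => a); split => //; apply: pf_const. Qed.

Lemma poly_on_coef (w : Word n d) : poly_on U (fun c => coef c w).
Proof. by exists (fun x => x ord0 (enum_rank w)); split => //; apply: pf_coord. Qed.

Lemma poly_on_add (f g : tens R n d -> R) :
  poly_on U f -> poly_on U g -> poly_on U (fun c => f c + g c).
Proof.
move=> [p [pp fp]] [q [pq gq]]; exists (fun x => p x + q x).
by split=> [|c Uc]; [apply: pf_add | rewrite fp ?gq].
Qed.

Lemma poly_on_mul (f g : tens R n d -> R) :
  poly_on U f -> poly_on U g -> poly_on U (fun c => f c * g c).
Proof.
move=> [p [pp fp]] [q [pq gq]]; exists (fun x => p x * q x).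
by split=> [|c Uc]; [apply: pf_mul | rewrite fp ?gq].
Qed.

Lemma poly_on_sum (I : Type) (r : seq I) (F : I -> tens R n d -> R) :
  (forall i, poly_on U (F i)) -> poly_on U (fun c => \sum_(i <- r) F i c).
Proof.
move=> polyF; elim: r => [|i r IHr].
  by apply: poly_on_eq (poly_on_cst 0) _ => c _; rewrite big_nil.
by apply: poly_on_eq (poly_on_add (polyF i) IHr) _ => c _; rewrite big_cons.
Qed.

Lemma poly_on_prod (I : Type) (r : seq I) (F : I -> tens R n d -> R) :
  (forall i, poly_on U (F i)) -> poly_on U (fun c => \prod_(i <- r) F i c).
Proof.
move=> polyF; elim: r => [|i r IHr].
  by apply: poly_on_eq (poly_on_cst 1) _ => c _; rewrite big_nil.
by apply: poly_on_eq (poly_on_mul (polyF i) IHr) _ => c _; rewrite big_cons.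
Qed.

End PolyOn.

Lemma diag_mulmxE (R : pzRingType) m n (L : 'M[R]_m) (P : 'M[R]_(m, n)) i j :
  is_diag_mx L -> (L *m P) i j = L i i * P i j.
Proof. by move=> /diag_mxP[e ->]; rewrite mul_diag_mx !mxE eqxx mulr1n. Qed.

Section MovingFrame.
Variables (R : realType) (n d : nat) (G : set 'M[R]_d) (U : set (tens R n d)).
Variables (rho lam kappa : tens R n d -> 'M[R]_d).
Hypotheses (subG : is_subgroup G) (frame_rho : moving_frame G U rho)
  (almost_poly : almost_polynomial G U rho lam kappa).

Definition normal_form (c : tens R n d) := act (lam c *m rho c) c.

Lemma normal_form_act (g : 'M[R]_d) (c : tens R n d) :
  G g -> U c -> normal_form (act g c) = normal_form c.
Proof.
case: subG => _ G_unit _ _; case: frame_rho => _ _ rho_act.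
case: almost_poly => _ lam_act _ _ _ Gg Uc.
by rewrite /normal_form lam_act // rho_act // actM mulmxA mulmxKV ?G_unit.
Qed.

Lemma coef_normal_form_poly (w : Word n d) :
  poly_on U (fun c => coef (normal_form c) w).
Proof.
case: almost_poly => lam_diag _ lam_rho_poly _ _.
pose P c := \sum_v
  if size (wseq v) == size (wseq w) then
    coef c v * \prod_(p <- zip (wseq w) (wseq v)) (lam c p.1 p.1 * rho c p.1 p.2)
  else 0.
apply: (poly_on_eq (g := P)) => [|c Uc].
  apply: poly_on_sum => v /=; case: (_ == _); last exact: poly_on_cst.
  apply: poly_on_mul; first exact: poly_on_coef.
  by apply: poly_on_prod => p; apply: lam_rho_poly.
rewrite /normal_form coef_act; apply: eq_bigr => v _; rewrite /act_kernel.
case: ifP => _; last by rewrite mulr0.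
congr (_ * _); apply: eq_bigr => p _.
exact: diag_mulmxE (lam_diag c Uc).2.
Qed.

Lemma normal_form_orbit (c c' : tens R n d) : U c -> U c' ->
  normal_form c = normal_form c' -> exists2 g, G g & c' = act g c.
Proof.
case: subG => _ G_unit GM GV; case: frame_rho => _ rho_G _.
case: almost_poly => lam_diag _ _ _ lam_kappa Uc Uc' eF.
have elam : lam c = lam c'.
  by rewrite (lam_kappa _ Uc) (lam_kappa _ Uc'); apply: congr1 eF.
have erho : act (rho c) c = act (rho c') c'.
  have lam_unit := (lam_diag c Uc).1.
  move: eF; rewrite /normal_form elam -!actM => /(congr1 (act (invmx (lam c')))).
  by rewrite !act_invmxK // -elam.
exists (invmx (rho c') *m rho c); first by apply: GM; [apply/GV/rho_G|apply/rho_G].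
by rewrite -actM erho act_invmxK //; apply/G_unit/rho_G.
Qed.

End MovingFrame.

Lemma factor_through_fibers (T B A : Type) (x0 : T) (S : set T) (f : T -> B)
    (I : T -> A) :
  (forall x y, S x -> S y -> f x = f y -> I x = I y) ->
  exists I' : B -> A, forall x, S x -> I x = I' (f x).
Proof.
move=> constI.
exists (fun b => I (if pselect (exists x, S x /\ f x = b) is left ex
                    then projT1 (cid ex) else x0)).
move=> x Sx; case: pselect => [ex|]; last by case; exists x.
by case: (cid ex) => y [Sy fy] /=; apply: constI; rewrite ?fy.
Qed.

Theorem proposition4p10 (R : realType) (n d : nat) (G : set 'M[R]_d)
  (U : set (tens R n d)) (rho lam kappa : tens R n d -> 'M[R]_d) :
  is_subgroup G ->
  (forall c, U c -> lie c) ->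
  (exists c, U c) ->
  (forall g c, G g -> U c -> U (act g c)) ->
  semialgebraic U ->
  moving_frame G U rho ->
  almost_polynomial G U rho lam kappa ->
  let F := fun c => act (lam c *m rho c) c in
  let nz := fun w : Word n d => exists c, U c /\ coef (F c) w <> 0 in
  (forall w, nz w ->
     poly_on U (fun c => coef (F c) w) /\
     invariant_on G U (fun c => coef (F c) w)) /\
  (forall I : tens R n d -> R, invariant_on G U I ->
     exists I' : ({w : Word n d | nz w} -> R) -> R,
       forall c, U c -> I c = I' (fun w => coef (F c) (proj1_sig w))).
Proof.
move=> subG _ _ _ _ frame_rho almost_poly F nz; split.
  move=> w _; split; first exact: coef_normal_form_poly almost_poly w.
  move=> g c Gg Uc; have F_act := normal_form_act subG frame_rho almost_poly Gg Uc.
  exact: (congr1 (fun x => coef x w) F_act).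
move=> I invI; apply: (factor_through_fibers 0) => c c' Uc Uc' eF.
have eFcc' : F c = F c'.
  apply: (eq_tens_on_support Uc Uc') => w nz_w.
  exact: (congr1 (fun h => h (exist _ w nz_w)) eF).
have [g Gg ->] := normal_form_orbit subG frame_rho almost_poly Uc Uc' eFcc'.
by rewrite invI.
Qed.
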